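(* Consider a ROS~2 application executed on a single processor by the events executor with the two-queue mechanism described in the context, under the standing assumptions of the context. Any element placed into the child queue by the release logic has priority at least as high as every other released subtask in the executor's queues, i.e., it is always a highest-priority element.
   Context: Model: a ROS~2 application is abstracted as a forest of trees of subtasks. Roots are released periodically/sporadically with known integer job priorities; a child subtask is released immediately when its parent completes (and only then), and inherits its parent's priority (fixed job-level priority). Execution is non-preemptive on a single processor; larger priority values mean higher priority. Executor mechanism (release logic): a released root subtask, whose priority is defined, is pushed into a priority queue (root_queue); a released child subtask, whose priority is undefined, is assigned the value latest_priority and pushed onto a LIFO queue (child_queue). Scheduling logic: at each scheduling decision the tops of the two queues are compared, the one of greater priority is popped and executed, and latest_priority is set to its priority. *)

From HB Require Import structures.
From mathcomp Require Import all_boot all_order all_algebra.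
Set Implicit Arguments. Unset Strict Implicit. Unset Printing Implicit Defensive.
Import Order.TTheory GRing.Theory Num.Theory.

(* The application is a forest given by
   a parent function: [parent v = None] iff v is a root.  A job (queue element)
   is a pair (subtask, priority); larger integer = higher priority. *)

Fixpoint ancestor (T : finType) (parent : T -> option T) (k : nat) (v : T)
  : option T :=
  match k with
  | 0 => Some v
  | k'.+1 => obind parent (ancestor parent k' v)
  end.

Definition is_forest (T : finType) (parent : T -> option T) : Prop :=
  forall (v : T) (k : nat), (0 < k)%N -> ancestor parent k v <> Some v.

Definition children (T : finType) (parent : T -> option T) (v : T) : seq T :=
  [seq c <- enum T | parent c == Some v].

(* Executor state: root_queue is a priority queue (a multiset, popped at a
   maximal element); child_queue is a LIFO stack whose head is its top. *)
Record state (T : finType) := State {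
  root_queue : seq (T * int);
  child_queue : seq (T * int);
  latest_priority : int }.

Definition push_children (T : finType) (cs : seq T) (lp : int)
  (q : seq (T * int)) : seq (T * int) :=
  foldl (fun q c => (c, lp) :: q) q cs.

(* One executor transition; the middle index is the list of elements placed
   into the child queue by the release logic during that transition. *)
Inductive step (T : finType) (parent : T -> option T)
  : state T -> seq (T * int) -> state T -> Prop :=
| step_release (r : T) (p : int) (st : state T) :
    parent r = None ->
    step parent st [::]
      (State ((r, p) :: root_queue st) (child_queue st) (latest_priority st))
| step_exec_root (v : T) (p : int) (cs : seq T) (st : state T) :
    (v, p) \in root_queue st ->
    (forall y, y \in root_queue st -> (y.2 <= p)%R) ->
    match child_queue st with [::] => True | c :: _ => (c.2 <= p)%R end ->
    (* children of v are released at its completion, in some order *)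
    perm_eq cs (children parent v) ->
    let lp := p in
    step parent st [seq (c, lp) | c <- cs]
      (State (rem (v, p) (root_queue st)) (push_children cs lp (child_queue st)) lp)
| step_exec_child (v : T) (p : int) (rest : seq (T * int)) (cs : seq T)
    (st : state T) :
    child_queue st = (v, p) :: rest ->
    (forall y, y \in root_queue st -> (y.2 <= p)%R) ->
    perm_eq cs (children parent v) ->
    let lp := p in
    step parent st [seq (c, lp) | c <- cs]
      (State (root_queue st) (push_children cs lp rest) lp).

Inductive reachable (T : finType) (parent : T -> option T) : state T -> Prop :=
| reach_init (l0 : int) : reachable parent (State [::] [::] l0)
| reach_step (st : state T) (pushed : seq (T * int)) (st' : state T) :
    reachable parent st -> step parent st pushed st' -> reachable parent st'.

From HB Require Import structures.
From mathcomp Require Import all_boot all_order all_algebra.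
Import Order.TTheory GRing.Theory Num.Theory.
Set Implicit Arguments. Unset Strict Implicit.

(* The key invariant is that the child queue is always sorted by non-increasing
   priority.  Every execution step pops a job of priority [p] that dominates
   everything left in both queues: the root queue by the scheduling guard, the
   child queue because its top is its maximum.  The released children are
   pushed with priority [latest_priority = p], so they dominate both queues
   and the sortedness of the child queue is preserved. *)

Local Open Scope ring_scope.

Section PriorityQueues.

Variable A : Type.

Definition prio_ge : rel (A * int) := fun a b => b.2 <= a.2.

Lemma prio_ge_trans : transitive prio_ge.
Proof. by move=> b a c /= le_ba le_cb; apply: le_trans le_cb le_ba. Qed.

Lemma sorted_prio_cons (c : A * int) q :
  sorted prio_ge (c :: q) -> all (fun y => y.2 <= c.2) q.
Proof. exact: order_path_min prio_ge_trans. Qed.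

Lemma sorted_prio_top_bounded (q : seq (A * int)) (p : int) :
  sorted prio_ge q ->
  match q with [::] => True | c :: _ => c.2 <= p end ->
  all (fun y => y.2 <= p) q.
Proof.
case: q => [//|c q] sorted_q le_cp /=; rewrite le_cp /=.
by apply: sub_all (sorted_prio_cons sorted_q) => y /le_trans; apply.
Qed.

End PriorityQueues.

Arguments prio_ge {A}.

Section PushChildren.

Variable T : finType.

Lemma all_push_children (cs : seq T) (p : int) (q : seq (T * int)) :
  all (fun y => y.2 <= p) q -> all (fun y => y.2 <= p) (push_children cs p q).
Proof. by elim: cs q => [|c cs IH] q //= q_le; apply: IH; rewrite /= lexx. Qed.

Lemma sorted_push_children (cs : seq T) (p : int) (q : seq (T * int)) :
  sorted prio_ge q -> all (fun y => y.2 <= p) q ->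
  sorted prio_ge (push_children cs p q).
Proof.
elim: cs q => [|c cs IH] q //= sorted_q q_le; apply: IH; last by rewrite /= lexx.
by rewrite /= path_sortedE ?sorted_q ?andbT //; apply: prio_ge_trans.
Qed.

End PushChildren.

Section Executor.

Variables (T : finType) (parent : T -> option T).

Lemma step_preserves_sorted_child_queue st pushed st' :
  step parent st pushed st' ->
  sorted prio_ge (child_queue st) -> sorted prio_ge (child_queue st').
Proof.
case=> //= [v p cs {}st _ _ top_le _ | v p rest cs {}st -> _ _] sorted_cq.
  by apply: sorted_push_children => //; apply: sorted_prio_top_bounded.
by apply: sorted_push_children (path_sorted sorted_cq) (sorted_prio_cons sorted_cq).
Qed.

Lemma reachable_sorted_child_queue st :
  reachable parent st -> sorted prio_ge (child_queue st).
Proof.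
elim=> // {}st pushed st' _ sorted_cq step_st.
exact: step_preserves_sorted_child_queue step_st sorted_cq.
Qed.

Lemma step_pushed_dominates st pushed st' x :
  step parent st pushed st' -> sorted prio_ge (child_queue st) -> x \in pushed ->
  all (fun y => y.2 <= x.2) (root_queue st' ++ child_queue st').
Proof.
case=> //= [v p cs {}st _ rq_le top_le _ | v p rest cs {}st cq_def rq_le _];
  move=> sorted_cq /mapP[c _ ->] /=; rewrite all_cat; apply/andP; split.
- by apply/allP => y /mem_rem /rq_le.
- by apply: all_push_children; apply: sorted_prio_top_bounded.
- exact/allP.
- by rewrite cq_def in sorted_cq; apply: all_push_children; apply: sorted_prio_cons sorted_cq.
Qed.

End Executor.

Theorem lemma4 (T : finType) (parent : T -> option T) (st : state T)
  (pushed : seq (T * int)) (st' : state T) (x : T * int) :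
  is_forest parent ->
  reachable parent st ->
  step parent st pushed st' ->
  x \in pushed ->
  forall y : T * int, y \in root_queue st' ++ child_queue st' ->
  (y.2 <= x.2)%R.
Proof.
move=> _ reach_st step_st x_pushed; apply/allP.
exact: step_pushed_dominates step_st (reachable_sorted_child_queue reach_st) x_pushed.
Qed.
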